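(* Let $X$ be a robust $X$-set parameter and let $G$ be a graph. If $X(K_1)=0$ or $G$ has no isolated vertices, then the automorphism group of $\mathfrak{X}(G)$ is generated by $\{\nu_R: R\subseteq V(G)\text{ is } X\text{-irrelevant}\}\cup M_X(G)$, where each $\psi\in M_X(G)$ acts on $\mathfrak{X}(G)$ by $S\mapsto\psi(S)$.
   Context: All graphs are finite, simple, undirected, with nonempty vertex set. A super $X$-set parameter $X$ assigns to each graph $G$ a family of subsets of $V(G)$, called the $X$-sets of $G$, such that: every graph isomorphism maps $X$-sets to $X$-sets; every graph has at least one $X$-set; and (Superset) if $S$ is an $X$-set of $G$ and $S\subseteq S'\subseteq V(G)$, then $S'$ is an $X$-set of $G$. $X(G)$ is the minimum cardinality of an $X$-set. A robust $X$-set parameter is a super $X$-set parameter that additionally satisfies: ($(n-1)$-set) if $G$ is connected of order $n\ge2$, every set of $n-1$ vertices is an $X$-set; (Component consistency) if $G_1,\dots,G_k$ are the connected components of $G$, then $S\subseteq V(G)$ is an $X$-set of $G$ iff $S\cap V(G_i)$ is an $X$-set of $G_i$ for all $i$. The $X$-TAR graph $\mathfrak{X}(G)$ has as vertices the $X$-sets of $G$, with $S_1S_2$ an edge iff $|S_1\ominus S_2|=1$. A vertex is $X$-irrelevant if it lies in no minimal (w.r.t. inclusion) $X$-set; a set is $X$-irrelevant if all its vertices are. For $R\subseteq V(G)$, $\nu_R(S)=S\ominus R$ (symmetric difference). $M_X(G)$ is the set of bijections $\psi:V(G)\to V(G)$ that send minimal $X$-sets of $G$ to minimal $X$-sets of $G$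 of the same size. *)

From mathcomp Require Import all_boot all_fingroup.
Set Implicit Arguments. Unset Strict Implicit. Unset Printing Implicit Defensive.

Definition simple_graph (T : finType) (e : rel T) : Prop :=
  0 < #|T| /\ symmetric e /\ irreflexive e.

(* A set parameter assigns to each graph the (boolean) family of its X-sets. *)
Definition Xparam := forall T : finType, rel T -> pred {set T}.

Definition super_param (X : Xparam) : Prop :=
  (forall (T1 T2 : finType) (e1 : rel T1) (e2 : rel T2) (f : T1 -> T2),
      simple_graph e1 -> simple_graph e2 -> bijective f ->
      (forall x y, e2 (f x) (f y) = e1 x y) ->
      forall S : {set T1}, X T1 e1 S -> X T2 e2 (f @: S))
  /\
  (forall (T : finType) (e : rel T), simple_graph e -> exists S, X T e S)
  /\
  (forall (T : finType) (e : rel T), simple_graph e ->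
      forall S S' : {set T}, S \subset S' -> X T e S -> X T e S').

Definition connected_graph (T : finType) (e : rel T) : Prop :=
  forall x y, connect e x y.

Definition component (T : finType) (e : rel T) (C : {set T}) : Prop :=
  exists x, C = [set y | connect e x y].

Definition ind_type (T : finType) (C : {set T}) := {x : T | x \in C}.
Definition ind_rel (T : finType) (e : rel T) (C : {set T}) : rel (@ind_type T C) :=
  fun x y => e (val x) (val y).
Definition ind_set (T : finType) (C S : {set T}) : {set @ind_type T C} :=
  [set x : @ind_type T C | val x \in S].

Definition robust_param (X : Xparam) : Prop :=
  super_param X
  /\ (forall (T : finType) (e : rel T), simple_graph e -> connected_graph e ->
        2 <= #|T| -> forall S : {set T}, #|S| = #|T| - 1 -> X T e S)
  /\ (forall (T : finType) (e : rel T), simple_graph e -> forall S : {set T},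
        X T e S <-> (forall C, component e C ->
                       X (@ind_type T C) (@ind_rel T e C) (@ind_set T C S))).

Definition Xnum (X : Xparam) (T : finType) (e : rel T) : nat :=
  \big[minn/#|T|]_(S : {set T} | X T e S) #|S|.

Definition K1rel : rel unit := fun _ _ => false.

Definition no_isolated (T : finType) (e : rel T) : Prop :=
  forall v, exists u, e v u.

Definition symdiff (T : finType) (A B : {set T}) : {set T} :=
  (A :\: B) :|: (B :\: A).

Definition minX (X : Xparam) (T : finType) (e : rel T) (S : {set T}) : bool :=
  minset (X T e) S.
Definition irrelevant_vertex (X : Xparam) (T : finType) (e : rel T) (v : T) : bool :=
  [forall S : {set T}, minX X e S ==> (v \notin S)].
Definition irrelevant_set (X : Xparam) (T : finType) (e : rel T) (R : {set T}) : bool :=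
  [forall v in R, irrelevant_vertex X e v].

Definition MX (X : Xparam) (T : finType) (e : rel T) : {set {perm T}} :=
  [set q : {perm T} | [forall S : {set T},
      minX X e S ==> (minX X e (q @: S) && (#|q @: S| == #|S|))]].

(* The X-TAR graph: vertices are X-sets, adjacency = symmetric difference of size 1 *)
Definition TARv (X : Xparam) (T : finType) (e : rel T) := {S : {set T} | X T e S}.
Definition tar_adj (X : Xparam) (T : finType) (e : rel T) (a b : TARv X e) : bool :=
  #|symdiff (val a) (val b)| == 1.

Definition TARaut (X : Xparam) (T : finType) (e : rel T) : {set {perm TARv X e}} :=
  [set p : {perm TARv X e} | [forall a, forall b, tar_adj (p a) (p b) == tar_adj a b]].

Definition TARgens (X : Xparam) (T : finType) (e : rel T) : {set {perm TARv X e}} :=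
  [set p : {perm TARv X e} |
     [exists R : {set T}, irrelevant_set X e R &&
        [forall a, val (p a) == symdiff (val a) R]]
  || [exists q : {perm T}, (q \in MX X e) &&
        [forall a, val (p a) == q @: val a]]].

From mathcomp Require Import all_boot all_fingroup.
Set Implicit Arguments. Unset Strict Implicit. Unset Printing Implicit Defensive.

(* X-sets are closed under supersets and V = V(G) is one of them, so any two
   X-sets S1, S2 are joined in the TAR graph by a path of length |S1 (+) S2|
   and every automorphism p preserves this distance.  The neighbours V - x of
   the top vertex V are sent to sets differing from p(V) in a single vertex
   sigma(x); comparing distances gives p(A) (+) p(V) = sigma(V - A) for every
   X-set A, i.e. p = nu_R o sigma with R the complement of p(V).  Deleting
   from an X-set A a vertex y with sigma(y) in R yields again an X-set, which
   makes sigma^-1(R), and then R itself, irrelevant; hence sigma preserves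
   X-sets and their minimal ones, i.e. sigma lies in M_X(G). *)

Section SetFacts.
Variable T : finType.
Implicit Types A B C : {set T}.

Lemma in_symdiff A B x : (x \in symdiff A B) = ((x \in A) != (x \in B)).
Proof. by rewrite !inE; case: (x \in A); case: (x \in B). Qed.

Lemma symdiff_eq0 A B : (symdiff A B == set0) = (A == B).
Proof.
apply/eqP/eqP => [/setP sd0 | ->]; apply/setP => x; last by rewrite in_symdiff inE eqxx.
by move: (sd0 x); rewrite in_symdiff inE; case: (x \in A); case: (x \in B).
Qed.

Lemma card_symdiff_triangle A B C : #|symdiff A B| <= #|symdiff A C| + #|symdiff C B|.
Proof.
apply: leq_trans (leq_card_setU _ _); apply: subset_leq_card.
apply/subsetP => x; rewrite in_setU !in_symdiff.
by case: (x \in A); case: (x \in B); case: (x \in C).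
Qed.

Lemma symdiffK A C : symdiff (symdiff A C) C = A.
Proof. by apply/setP => x; rewrite !in_symdiff; case: (x \in A); case: (x \in C). Qed.

Lemma symdiffIr C : injective (fun A => symdiff A C).
Proof. by move=> A B sdAB; rewrite -(symdiffK A C) sdAB symdiffK. Qed.

Lemma symdiff_cancelr A B C : symdiff (symdiff A C) (symdiff B C) = symdiff A B.
Proof.
by apply/setP => x; rewrite !in_symdiff; case: (x \in A); case: (x \in B); case: (x \in C).
Qed.

Lemma symdiffT A : symdiff A setT = ~: A.
Proof. by apply/setP => x; rewrite in_symdiff !inE; case: (x \in A). Qed.

Lemma symdiffCl A B : symdiff (~: A) B = symdiff A (~: B).
Proof. by apply/setP => x; rewrite !in_symdiff !inE; case: (x \in A); case: (x \in B). Qed.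

Lemma symdiff_set1 A y : y \notin A -> symdiff A [set y] = y |: A.
Proof.
move=> yA; apply/setP => x; rewrite in_symdiff !inE.
by case: (x =P y) => [-> | _]; [rewrite (negbTE yA) | case: (x \in A)].
Qed.

Lemma setD1_sub_symdiff A x : A :\ x \subset symdiff A [set x].
Proof. by apply/subsetP => y; rewrite in_symdiff !inE => /andP [/negbTE -> ->]. Qed.

Lemma symdiff_set1_step A B x : x \in symdiff A B ->
  #|symdiff A (symdiff A [set x])| = 1 /\
  (#|symdiff (symdiff A [set x]) B|).+1 = #|symdiff A B|.
Proof.
move=> xAB; split.
  apply/eqP/cards1P; exists x; apply/setP => y.
  by rewrite !in_symdiff; case: (y \in A); case: (y \in [set x]).
suff -> : symdiff (symdiff A [set x]) B = symdiff A B :\ x by rewrite [RHS](cardsD1 x) xAB.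
apply/setP => y; rewrite !(in_symdiff, inE); case: (y =P x) => [-> | _].
  by move: xAB; rewrite in_symdiff; case: (x \in A); case: (x \in B).
by case: (y \in A); case: (y \in B).
Qed.

Lemma mem_imset_perm (q : {perm T}) A x : (x \in q @: A) = ((q^-1)%g x \in A).
Proof. by rewrite -preim_permV inE. Qed.

Lemma imset_perm_symdiff (q : {perm T}) A B :
  symdiff (q @: A) (q @: B) = q @: symdiff A B.
Proof. by apply/setP => x; rewrite !(in_symdiff, mem_imset_perm). Qed.

Lemma imset_perm_subset (q : {perm T}) A B : (q @: A \subset q @: B) = (A \subset B).
Proof.
apply/idP/idP => [qAB | /imsetS //]; apply/subsetP => x xA.
by rewrite -(mem_imset B x (@perm_inj _ q)) (subsetP qAB) ?imset_f.
Qed.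

Lemma imset_perm_preim (q : {perm T}) B : q @: (q @^-1: B) = B.
Proof. by apply/setP => x; rewrite mem_imset_perm inE permKV. Qed.

End SetFacts.

Lemma minset_setD1 (T : finType) (P : pred {set T}) M v :
  minset P M -> v \in M -> ~~ P (M :\ v).
Proof.
move=> minM vM; apply/negP => PMv; have := minsetinf minM PMv (subsetDl M [set v]).
by move/setP/(_ v); rewrite !inE eqxx vM.
Qed.

Lemma inj_homo_onto (T : finType) (P : pred T) (f : T -> T) :
  injective f -> {homo f : x / P x} -> forall y, P y -> exists2 x, P x & f x = y.
Proof.
move=> f_inj fP y Py; pose PT := [set x | P x].
have fPT : f @: PT \subset PT.
  by apply/subsetP => _ /imsetP [x + ->]; rewrite !inE; exact: fP.
have /eqP im_PT : f @: PT == PT by rewrite eqEcard fPT (card_imset _ f_inj) leqnn.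
have : y \in PT by rewrite inE.
by rewrite -im_PT => /imsetP [x]; rewrite inE => Px ->; exists x.
Qed.

Section TARAutomorphisms.
Variables (X : Xparam) (T : finType) (e : rel T).
Local Notation Xset := (@X T e).
Hypothesis Xset_up : forall S S' : {set T}, S \subset S' -> Xset S -> Xset S'.
Hypothesis XsetT : Xset setT.
Implicit Types A B C M R : {set T}.

Lemma irrelevant_setP R :
  reflect (forall M v, minX X e M -> v \in R -> v \notin M) (irrelevant_set X e R).
Proof.
apply: (iffP forall_inP) => irrR => [M v minM vR | v vR].
  by have /forallP /(_ M) /implyP := irrR v vR; apply.
by apply/forallP => M; apply/implyP => minM; apply: irrR.
Qed.

Lemma Xset_symdiff_irrelevant R :
  irrelevant_set X e R -> {homo (fun S => symdiff S R) : S / Xset S}.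
Proof.
move=> /irrelevant_setP irrR S XS; have [M minM MS] := minset_exists XS.
apply: Xset_up (minsetp minM); apply/subsetP => x xM; rewrite in_symdiff (subsetP MS) //=.
exact: contraL (irrR _ _ minM) xM.
Qed.

Lemma Xset_imset_MX (q : {perm T}) :
  q \in MX X e -> {homo (fun S : {set T} => q @: S) : S / Xset S}.
Proof.
rewrite inE => /forallP qMX S XS; have [M minM MS] := minset_exists XS.
have /implyP /(_ minM) /andP [minqM _] := qMX M.
exact: Xset_up (imsetS _ MS) (minsetp minqM).
Qed.

Lemma Xset_step A B : Xset A -> Xset B -> A != B ->
  exists2 C, Xset C &
    #|symdiff A C| = 1 /\ (#|symdiff C B|).+1 = #|symdiff A B|.
Proof.
move=> XA XB neqAB.
have [/eqP | [x]] := set_0Vmem (B :\: A); last first.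
  rewrite inE => /andP [xA xB]; exists (symdiff A [set x]); last first.
    by apply: symdiff_set1_step; rewrite in_symdiff xB (negbTE xA).
  by apply: Xset_up XA; apply: subset_trans (setD1_sub_symdiff A x); rewrite subsetD1 subxx.
rewrite setD_eq0 => BA; have /set0Pn [x] : A :\: B != set0.
  by rewrite setD_eq0; apply: contra neqAB => AB; rewrite eqEsubset AB.
rewrite inE => /andP [xB xA]; exists (symdiff A [set x]); last first.
  by apply: symdiff_set1_step; rewrite in_symdiff xA (negbTE xB).
by apply: Xset_up XB; apply: subset_trans (setD1_sub_symdiff A x); rewrite subsetD1 BA.
Qed.

Lemma TARaut_adj (p : {perm TARv X e}) a b :
  p \in TARaut X e -> tar_adj (p a) (p b) = tar_adj a b.
Proof. by rewrite inE => /forallP /(_ a) /forallP /(_ b) /eqP. Qed.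

Lemma TARaut_group_set : group_set (TARaut X e).
Proof.
apply/group_setP; split.
  by rewrite inE; apply/forallP => a; apply/forallP => b; rewrite !perm1.
move=> p p' p_aut p'_aut; rewrite inE; apply/forallP => a; apply/forallP => b.
by rewrite !permM (TARaut_adj _ _ p'_aut) (TARaut_adj _ _ p_aut).
Qed.

Canonical TARaut_group := Group TARaut_group_set.

Lemma TARaut_dist_le (p : {perm TARv X e}) n a b : p \in TARaut X e ->
  #|symdiff (val a) (val b)| <= n -> #|symdiff (val (p a)) (val (p b))| <= n.
Proof.
move=> p_aut; elim: n a b => [|n IHn] a b.
  by rewrite !leqn0 !cards_eq0 !symdiff_eq0 => /eqP /val_inj ->.
have [/val_inj -> _ | neq_ab] := eqVneq (val a) (val b).
  by rewrite (_ : symdiff _ _ = set0) ?cards0 //; apply/eqP; rewrite symdiff_eq0.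
have [C XC [dAC dCB]] := Xset_step (valP a) (valP b) neq_ab.
pose c : TARv X e := exist _ C XC.
have /eqP dpac : tar_adj (p a) (p c) by rewrite TARaut_adj // /tar_adj dAC.
rewrite -dCB ltnS => dCBn.
apply: leq_trans (card_symdiff_triangle _ _ (val (p c))) _.
by rewrite dpac add1n ltnS; exact: IHn.
Qed.

Lemma TARaut_dist (p : {perm TARv X e}) a b : p \in TARaut X e ->
  #|symdiff (val (p a)) (val (p b))| = #|symdiff (val a) (val b)|.
Proof.
move=> p_aut; apply/eqP; rewrite eqn_leq TARaut_dist_le //=.
have pV_aut : (p^-1)%g \in TARaut X e by rewrite groupV.
by have := TARaut_dist_le pV_aut (leqnn #|symdiff (val (p a)) (val (p b))|); rewrite !permK.
Qed.

Definition deletable x := Xset (setT :\ x).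

Lemma Xset_deletable A x : Xset A -> x \notin A -> deletable x.
Proof. by move=> XA xA; apply: Xset_up XA; rewrite subsetD1 subsetT xA. Qed.

Lemma symdiff_Xset_deletable A B x :
  Xset A -> Xset B -> x \in symdiff A B -> deletable x.
Proof.
move=> XA XB; rewrite in_symdiff.
have [xA | xA] := boolP (x \in A); last by rewrite (Xset_deletable XA xA).
by have [xB | xB] := boolP (x \in B); rewrite ?xA ?xB ?(Xset_deletable XB xB).
Qed.

Definition tar_map (f : {set T} -> {set T}) (fX : {homo f : S / Xset S})
    (a : TARv X e) : TARv X e :=
  Sub (f (val a)) (fX _ (valP a)).

Lemma tar_map_inj f fX : injective f -> injective (@tar_map f fX).
Proof. by move=> f_inj a b /(congr1 val) /f_inj /val_inj. Qed.

Section Reconstruction.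
Variable p : {perm TARv X e}.
Hypothesis p_aut : p \in TARaut X e.

(* [p] read on sets of vertices; its value on sets that are not X-sets is junk. *)
Definition pset A := val (p (insubd (exist _ setT XsetT) A)).
Local Notation ptop := (pset setT).

Lemma pset_Xset A : Xset (pset A).
Proof. exact: valP. Qed.

Lemma pset_val a : pset (val a) = val (p a).
Proof. by rewrite /pset valKd. Qed.

Lemma card_symdiff_pset A B :
  Xset A -> Xset B -> #|symdiff (pset A) (pset B)| = #|symdiff A B|.
Proof. by move=> XA XB; rewrite /pset TARaut_dist // !insubdK. Qed.

Lemma pset_inj : {in Xset &, injective pset}.
Proof.
move=> A B XA XB /eqP; rewrite -symdiff_eq0 -cards_eq0 card_symdiff_pset //.
by rewrite cards_eq0 symdiff_eq0 => /eqP.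
Qed.

Lemma pset_onto B : Xset B -> exists2 A, Xset A & pset A = B.
Proof.
move=> XB; exists (val ((p^-1)%g (insubd (exist _ setT XsetT) B))); first exact: valP.
by rewrite pset_val permKV insubdK.
Qed.

(* Vertices that are not deletable lie in every X-set; [sigma] fixes them. *)
Definition sigma x :=
  if deletable x then odflt x [pick y in symdiff (pset (setT :\ x)) ptop] else x.

Lemma sigmaE x : deletable x -> symdiff (pset (setT :\ x)) ptop = [set sigma x].
Proof.
move=> del_x; have /cards1P [y sd_y] : #|symdiff (pset (setT :\ x)) ptop| == 1.
  by rewrite card_symdiff_pset // symdiffT setTD setCK cards1.
rewrite /sigma del_x sd_y; case: pickP => [z | /(_ y)]; first by rewrite inE => /eqP ->.
by rewrite inE eqxx.
Qed.

Lemma sigma_deletable x : deletable x -> deletable (sigma x).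
Proof.
move=> del_x; apply: symdiff_Xset_deletable (pset_Xset (setT :\ x)) (pset_Xset setT) _.
by rewrite sigmaE // set11.
Qed.

Lemma sigma_inj : injective sigma.
Proof.
have sigma_id x : ~~ deletable x -> sigma x = x by rewrite /sigma => /negbTE ->.
move=> x y; have [del_x | ndel_x] := boolP (deletable x);
  have [del_y | ndel_y] := boolP (deletable y).
- move=> /(congr1 (fun z => [set z])); rewrite -!sigmaE // => /symdiffIr /pset_inj.
  move=> /(_ del_x del_y) /setP /(_ x).
  by rewrite !inE eqxx !andbT => /esym /negbT /negPn /eqP.
- by move=> vxy; move: (sigma_deletable del_x); rewrite vxy sigma_id // (negbTE ndel_y).
- by move=> vxy; move: (sigma_deletable del_y); rewrite -vxy sigma_id // (negbTE ndel_x).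
- by rewrite !sigma_id.
Qed.

Definition sigma_perm := perm sigma_inj.

Lemma sigma_notin A x : Xset A -> x \notin A -> sigma x \in symdiff (pset A) ptop.
Proof.
move=> XA xA; have del_x := Xset_deletable XA xA; apply/negPn/negP => vxA.
have : #|symdiff (pset A) (pset (setT :\ x))| <= #|symdiff A setT|.
  rewrite card_symdiff_pset //; apply: subset_leq_card; apply/subsetP => y.
  rewrite !(in_symdiff, inE); case: (y =P x) => [-> | _]; first by rewrite (negbTE xA).
  by case: (y \in A).
rewrite -(symdiff_cancelr _ _ ptop) sigmaE // symdiff_set1 // cardsU1 vxA.
by rewrite card_symdiff_pset // add1n ltnn.
Qed.

Lemma symdiff_pset_top A : Xset A -> symdiff (pset A) ptop = sigma_perm @: ~: A.
Proof.
move=> XA; apply/esym/eqP; rewrite eqEcard card_imset; last exact: perm_inj.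
rewrite card_symdiff_pset // symdiffT leqnn andbT.
by apply/subsetP => _ /imsetP [x + ->]; rewrite inE permE; apply: sigma_notin.
Qed.

Definition Rtop := ~: ptop.

Lemma psetE A : Xset A -> pset A = symdiff (sigma_perm @: A) Rtop.
Proof.
move=> XA; rewrite -(symdiffK (pset A) ptop) symdiff_pset_top // -symdiffCl.
by congr symdiff; apply/setP => y; rewrite !(inE, mem_imset_perm).
Qed.

Lemma Xset_setD1 A y : Xset A -> y \in A -> sigma_perm y \in Rtop -> Xset (A :\ y).
Proof.
move=> XA yA vyR.
have [A' XA' psetA'] :
    exists2 A', Xset A' & pset A' = symdiff (sigma_perm @: (A :\ y)) Rtop.
  apply: pset_onto; apply: Xset_up (pset_Xset A); rewrite psetE //.
  apply/subsetP => z; rewrite !(in_symdiff, mem_imset_perm) in_setD1.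
  case: (z =P sigma_perm y) => [-> | nz]; first by rewrite permK yA vyR.
  suff -> : (sigma_perm^-1)%g z != y by [].
  by apply: contra_not_neq nz => <-; rewrite permKV.
by move: psetA'; rewrite psetE // => /symdiffIr /(imset_inj perm_inj) <-.
Qed.

Lemma sigma_perm_preim_irrelevant : irrelevant_set X e (sigma_perm @^-1: Rtop).
Proof.
apply/irrelevant_setP => M v minM; rewrite inE => vR.
apply/negP => vM; move/negP: (minset_setD1 minM vM); apply.
exact: Xset_setD1 (minsetp minM) vM vR.
Qed.

Lemma Xset_vperm : {homo (fun A : {set T} => sigma_perm @: A) : A / Xset A}.
Proof.
move=> A XA; have XAR := Xset_symdiff_irrelevant sigma_perm_preim_irrelevant XA.
suff <- : pset (symdiff A (sigma_perm @^-1: Rtop)) = sigma_perm @: A by apply: pset_Xset.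
by rewrite psetE // -imset_perm_symdiff imset_perm_preim symdiffK.
Qed.

Lemma sigma_perm_Xset_onto B : Xset B -> exists2 A, Xset A & sigma_perm @: A = B.
Proof. exact: (@inj_homo_onto _ Xset _ (imset_inj perm_inj) Xset_vperm). Qed.

Lemma sigma_perm_MX : sigma_perm \in MX X e.
Proof.
rewrite inE; apply/forallP => M; apply/implyP => /minsetP [XM minM].
rewrite card_imset ?eqxx ?andbT; last exact: perm_inj.
apply/minsetP; split => [|B XB BM]; first exact: Xset_vperm.
have [A XA defB] := sigma_perm_Xset_onto XB; rewrite -defB imset_perm_subset in BM *.
by rewrite (minM A XA BM).
Qed.

Lemma Rtop_irrelevant : irrelevant_set X e Rtop.
Proof.
apply/irrelevant_setP => M v minM vR; apply/negP => vM.
move/negP: (minset_setD1 minM vM); apply.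
have [A XA defM] := sigma_perm_Xset_onto (minsetp minM).
have vA : (sigma_perm^-1)%g v \in A by rewrite -mem_imset_perm defM.
have /Xset_vperm : Xset (A :\ (sigma_perm^-1)%g v) by apply: Xset_setD1; rewrite ?permKV.
congr Xset; apply/setP => z.
by rewrite -defM !(mem_imset_perm, inE) (inj_eq perm_inj).
Qed.

Lemma TARaut_in_gen : p \in <<TARgens X e>>%g.
Proof.
pose pv := perm (@tar_map_inj _ Xset_vperm (imset_inj (@perm_inj _ sigma_perm))).
pose pR :=
  perm (@tar_map_inj _ (Xset_symdiff_irrelevant Rtop_irrelevant) (@symdiffIr _ Rtop)).
have -> : p = (pv * pR)%g.
  by apply/permP => a; apply: val_inj; rewrite permM !permE /= -pset_val psetE ?valP.
rewrite groupM // mem_gen // inE; apply/orP; [right | left]; apply/existsP.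
  by exists sigma_perm; rewrite sigma_perm_MX; apply/forallP => a; rewrite permE.
by exists Rtop; rewrite Rtop_irrelevant; apply/forallP => a; rewrite permE.
Qed.

End Reconstruction.

Lemma TARgens_sub : TARgens X e \subset TARaut X e.
Proof.
apply/subsetP => g; rewrite !inE => /orP [] /existsP [? /andP [_ /forallP gE]];
  apply/forallP => a; apply/forallP => b; rewrite /tar_adj (eqP (gE a)) (eqP (gE b)).
  by rewrite symdiff_cancelr.
by rewrite imset_perm_symdiff card_imset //; exact: perm_inj.
Qed.

Lemma TARaut_gen : TARaut X e = <<TARgens X e>>%g.
Proof.
apply/eqP; rewrite eqEsubset gen_subG TARgens_sub andbT.
by apply/subsetP => p; apply: TARaut_in_gen.
Qed.

End TARAutomorphisms.

Theorem theorem2p27 (X : Xparam) (T : finType) (e : rel T) :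
  robust_param X -> simple_graph e ->
  (Xnum X K1rel = 0 \/ no_isolated e) ->
  (forall R : {set T}, irrelevant_set X e R ->
     forall S : {set T}, X T e S -> X T e (symdiff S R)) /\
  (forall q : {perm T}, q \in MX X e ->
     forall S : {set T}, X T e S -> X T e (q @: S)) /\
  TARaut X e = <<TARgens X e>>%g.
Proof.
move=> [[_ [Xset_ex Xset_up]] _] simple_e _.
have {}Xset_up := Xset_up T e simple_e.
have XsetT : X T e setT.
  by have [S XS] := Xset_ex T e simple_e; apply: Xset_up (subsetT S) XS.
split; [|split].
- by move=> R; apply: Xset_symdiff_irrelevant.
- by move=> q; apply: Xset_imset_MX.
- exact: TARaut_gen.
Qed.
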